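(* Let $\Gamma=(V,E)$ be a $d$-regular graph on $N$ vertices whose adjacency matrix $A$ has eigenvalues $d=\lambda_1\ge\lambda_2\ge\dots\ge\lambda_N$. Let $M\in\{1,\dots,N-1\}$ with $|\lambda_M|<|\lambda_N|$, and let $U=\mathrm{Span}\{\mathbf{f}\}\oplus\bigoplus_{i>M}\ker(A-\lambda_iI)$. Let $X\subset V$ be an independent set, $\alpha=|X|/N$, and $D=\|\chi_X-P_U(\chi_X)\|_2$. Then $$D^2\le \frac{(1-\alpha)|\lambda_N|-d\alpha}{|\lambda_N|-|\lambda_M|}\,\alpha.$$
   Context: $\mathbf{f}$ is the all-ones vector in $\mathbb{R}^V$, $\chi_X$ the characteristic vector of $X$, and $\mathbb{R}^V$ carries the inner product $\langle x,y\rangle=\frac1{|V|}\sum_{i\in V}x_iy_i$ with norm $\|x\|_2=\sqrt{\langle x,x\rangle}$. $P_U$ denotes orthogonal projection onto $U$. An independent set is a set of vertices with no edges between them. *)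

From HB Require Import structures.
From mathcomp Require Import all_boot all_order all_algebra.
Set Implicit Arguments. Unset Strict Implicit. Unset Printing Implicit Defensive.
Import Order.TTheory GRing.Theory Num.Theory.
Local Open Scope ring_scope.

Definition adjmx (R : nzRingType) (N : nat) (e : rel 'I_N) : 'M[R]_N :=
  \matrix_(i, j) (e i j)%:R.

Definition onesv (R : nzRingType) (N : nat) : 'rV[R]_N := const_mx 1.

Definition charv (R : nzRingType) (N : nat) (X : {set 'I_N}) : 'rV[R]_N :=
  \row_i (i \in X)%:R.

Definition inner (R : fieldType) (N : nat) (x y : 'rV[R]_N) : R :=
  (N%:R)^-1 * \sum_(i < N) x 0 i * y 0 i.

Definition sqnorm (R : fieldType) (N : nat) (x : 'rV[R]_N) : R := inner x x.

Definition is_orth_proj (R : fieldType) (N m : nat) (U : 'M[R]_(m, N))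
  (x p : 'rV[R]_N) : Prop :=
  (p <= U)%MS /\ forall u : 'rV[R]_N, (u <= U)%MS -> inner (x - p) u = 0.

Definition Usp (R : fieldType) (N : nat) (A : 'M[R]_N) (lam : nat -> R) (M : nat)
  : 'M[R]_N :=
  (<<onesv R N>> + \sum_(M.+1 <= i < N.+1) kermx (A - (lam i)%:M))%MS.

From HB Require Import structures.
From mathcomp Require Import all_boot all_order all_algebra.
From mathcomp Require Import ring lra.
Set Implicit Arguments. Unset Strict Implicit. Unset Printing Implicit Defensive.
Import Order.TTheory GRing.Theory Num.Theory.
Local Open Scope ring_scope.

(* Write chi = chi_X, f = all-ones, p = P_U(chi), alpha = |X|/N, and split
     chi = alpha f + q + w,   q := p - alpha f in U,   w := chi - p orthogonal to U.
   Since f is an eigenvector of A (regularity), U is A-invariant and q is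
   orthogonal to f, all cross terms vanish in
     |X| = <chi, chi>    = alpha^2 N   + <q,q>   + <w,w>,
     0   = <chi A, chi>  = alpha^2 d N + <qA,q> + <wA,w>,
   the second one being 0 because X is independent.  A Rayleigh-quotient
   argument for the symmetric matrix A gives <qA,q> >= lam_N <q,q> and, since
   w is orthogonal to every eigenspace with eigenvalue below lam_M,
   <wA,w> >= lam_M <w,w>.  Eliminating <q,q> yields the bound on <w,w>/N. *)

Section DotProduct.
Variables (R : realFieldType) (n : nat).
Implicit Types (x y z : 'rV[R]_n) (B : 'M[R]_n).

Definition dot x y : R := \sum_(i < n) x 0 i * y 0 i.

Lemma dotC x y : dot x y = dot y x.
Proof. by apply: eq_bigr => i _; rewrite mulrC. Qed.

Lemma dotDr x y z : dot x (y + z) = dot x y + dot x z.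
Proof. by rewrite /dot -big_split; apply: eq_bigr => i _; rewrite mxE mulrDr. Qed.

Lemma dotZr x a y : dot x (a *: y) = a * dot x y.
Proof. by rewrite /dot mulr_sumr; apply: eq_bigr => i _; rewrite mxE mulrCA. Qed.

Lemma dotBr x y z : dot x (y - z) = dot x y - dot x z.
Proof.
rewrite /dot -sumrB; apply: eq_bigr => i _.
by rewrite !mxE mulrBr.
Qed.

Lemma dot0r x : dot x 0 = 0.
Proof. by rewrite /dot big1 // => i _; rewrite mxE mulr0. Qed.

Lemma dot_sumr (I : finType) (P : pred I) x (F : I -> 'rV[R]_n) :
  dot x (\sum_(i | P i) F i) = \sum_(i | P i) dot x (F i).
Proof. by apply: (big_morph _ (dotDr x) (dot0r x)). Qed.

Lemma dotDl x y z : dot (x + y) z = dot x z + dot y z.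
Proof. by rewrite dotC dotDr !(dotC z). Qed.

Lemma dotZl a x y : dot (a *: x) y = a * dot x y.
Proof. by rewrite dotC dotZr dotC. Qed.

Lemma dot_ge0 x : 0 <= dot x x.
Proof. by apply: sumr_ge0 => i _; rewrite -expr2 sqr_ge0. Qed.

Lemma dot_eq0 x : dot x x = 0 -> x = 0.
Proof.
move=> x0; apply/rowP => i; rewrite mxE.
have sq_ge0 j : true -> 0 <= x 0 j * x 0 j by rewrite -expr2 sqr_ge0.
move: (psumr_eq0P sq_ge0 x0 (i := i) isT) => /eqP.
by rewrite mulf_eq0 orbb => /eqP.
Qed.

Lemma dot_mulmx_sym B : B^T = B -> forall x y, dot (x *m B) y = dot x (y *m B).
Proof.
move=> Bsym x y; rewrite /dot.
under eq_bigr => i _ do rewrite mxE big_distrl /=.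
under [RHS]eq_bigr => i _ do rewrite mxE big_distrr /=.
rewrite exchange_big /=; apply: eq_bigr => i _; apply: eq_bigr => j _.
by rewrite -{2}Bsym mxE mulrAC mulrA.
Qed.

Lemma dot_split3 B a b c : B^T = B ->
  dot (a *m B) b = 0 -> dot (a *m B) c = 0 -> dot (b *m B) c = 0 ->
  dot ((a + b + c) *m B) (a + b + c) =
    dot (a *m B) a + dot (b *m B) b + dot (c *m B) c.
Proof.
move=> Bsym ab ac bc.
have swap x y : dot (x *m B) y = dot (y *m B) x by rewrite dot_mulmx_sym // dotC.
rewrite !mulmxDl !dotDl !dotDr ab ac bc (swap b a) (swap c a) (swap c b) ab ac bc.
ring.
Qed.

Lemma dot_pythagoras a b c : dot a b = 0 -> dot a c = 0 -> dot b c = 0 ->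
  dot (a + b + c) (a + b + c) = dot a a + dot b b + dot c c.
Proof. by have := @dot_split3 1%:M a b c (trmx1 _ _); rewrite !mulmx1. Qed.

End DotProduct.

(* A symmetric matrix has no nilpotent part: v B^(k+1) = 0 forces v B = 0,
   because |v B^(j+1)|^2 = <v B^j, v B^(j+2)>. *)
Lemma sym_mx_pow_kernel (R : realFieldType) n (B : 'M[R]_n.+1) (v : 'rV_n.+1) k :
  B^T = B -> v *m B ^+ k.+1 = 0 -> v *m B = 0.
Proof.
move=> Bsym; elim: k => [|k IH]; first by rewrite expr1.
move=> vBk; apply: IH; set y := v *m B ^+ k.
have yB : v *m B ^+ k.+1 = y *m B by rewrite /y -mulmxA mulmxE -exprSr.
have yBB : y *m B *m B = 0 by rewrite -yB -mulmxA mulmxE -exprSr.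
by apply: dot_eq0; rewrite yB dot_mulmx_sym // yBB dot0r.
Qed.

Section SpectralBound.
Variables (R : realFieldType) (n : nat) (A : 'M[R]_n.+1) (mu : 'I_n.+1 -> R).
Hypothesis A_sym : A^T = A.
Hypothesis A_char : char_poly A = \prod_(i < n.+1) ('X - (mu i)%:P).

Definition first_occ (i : 'I_n.+1) : bool :=
  [forall j : 'I_n.+1, (j < i)%N ==> (mu j != mu i)].

Lemma first_occ_exists i : exists2 j, first_occ j & mu j = mu i.
Proof.
have [j /eqP mu_j j_min] := @arg_minnP _ i (fun j => mu j == mu i) val (eqxx _).
exists j => //; apply/forallP => k; apply/implyP => kj; rewrite mu_j.
by apply/eqP => mu_k; move: (j_min k (introT eqP mu_k)); rewrite leqNgt kj.
Qed.

Lemma first_occ_neq i j : first_occ i -> first_occ j -> i != j -> mu i != mu j.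
Proof.
move=> /forallP occ_i /forallP occ_j; case: (ltngtP i j) => [ij|ji|/val_inj ->].
- by move: (occ_j i); rewrite ij.
- by move: (occ_i j); rewrite ji eq_sym.
- by rewrite eqxx.
Qed.

(* The product of the distinct linear factors of the characteristic
   polynomial; it is squarefree, so its kernel splits into eigenspaces. *)
Definition radical_char : {poly R} := \prod_(i | first_occ i) ('X - (mu i)%:P).

Lemma horner_mx_sym p : (horner_mx A p)^T = horner_mx A p.
Proof.
elim/poly_ind: p => [|p c IH]; first by rewrite rmorph0 trmx0.
rewrite !rmorphD !rmorphM /= horner_mx_X horner_mx_C linearD /= tr_scalar_mx.
rewrite -mulmxE trmx_mul IH A_sym; congr (_ + _).
by have /esym := comm_mx_horner p (comm_mx_refl A).
Qed.

Lemma char_dvd_radical_exp : char_poly A %| radical_char ^+ n.+1.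
Proof.
rewrite -{2}[n.+1]card_ord -prodr_const A_char.
apply: (big_ind2 (fun p q => p %| q)) => //; first by move=> *; apply: dvdp_mul.
move=> i _; have [j occ_j <-] := first_occ_exists i.
by rewrite /radical_char (bigD1 j) //= dvdp_mulr.
Qed.

(* By Cayley-Hamilton radical_char(A)^(n+1) = 0, hence radical_char(A) = 0
   since radical_char(A) is symmetric: A is diagonalisable. *)
Lemma radical_char_annihilates (v : 'rV[R]_n.+1) : v *m horner_mx A radical_char = 0.
Proof.
apply: (sym_mx_pow_kernel (k := n) (horner_mx_sym _)).
have [q q_def] := dvdpP _ _ char_dvd_radical_exp.
by rewrite -rmorphXn /= q_def rmorphM /= Cayley_Hamilton mulr0 mulmx0.
Qed.

Lemma eigen_decomposition (v : 'rV[R]_n.+1) : exists u : 'I_n.+1 -> 'rV[R]_n.+1,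
  v = \sum_(i | first_occ i) u i /\ forall i, u i *m A = mu i *: u i.
Proof.
have : (v <= kermxpoly A radical_char)%MS.
  by apply/sub_kermxP; apply: radical_char_annihilates.
rewrite (kermxpoly_prod A (P := first_occ) (p_ := fun i => 'X - (mu i)%:P)); last first.
  move=> i j occ_i occ_j ji; rewrite coprimep_XsubC2 // subr_eq0.
  by apply: first_occ_neq; rewrite // eq_sym.
case/sub_sumsmxP => u ->.
exists (fun i => u i *m kermxpoly A ('X - (mu i)%:P)); split => // i.
by apply/eigenspaceP; rewrite eigenspace_poly submxMl.
Qed.

Lemma eigen_orthogonal (x y : 'rV[R]_n.+1) a b :
  x *m A = a *: x -> y *m A = b *: y -> a != b -> dot x y = 0.
Proof.
move=> xA yA ab; apply/eqP; rewrite -[_ == 0]orFb -(negbTE ab) -subr_eq0 -mulf_eq0.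
by rewrite mulrBl -dotZl -xA dot_mulmx_sym // yA dotZr subrr.
Qed.

Lemma rayleigh_lower_bound c (v : 'rV[R]_n.+1) :
  (forall i, mu i < c -> forall u, u *m A = mu i *: u -> dot v u = 0) ->
  c * dot v v <= dot (v *m A) v.
Proof.
move=> v_orth; have [u [vE uA]] := eigen_decomposition v.
have v_u i : first_occ i -> dot v (u i) = dot (u i) (u i).
  move=> occ_i; rewrite {1}vE dotC dot_sumr (bigD1 i) //= big1 ?addr0 //.
  move=> j /andP[occ_j ji]; apply: eigen_orthogonal (uA i) (uA j) _.
  by apply: first_occ_neq; rewrite // eq_sym.
rewrite {2 4}vE !dot_sumr mulr_sumr; apply: ler_sum => i occ_i.
rewrite dot_mulmx_sym // uA dotZr v_u //.
have [lt_c|ge_c] := ltrP (mu i) c; last by rewrite ler_wpM2r ?dot_ge0.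
by rewrite -v_u // (v_orth i lt_c _ (uA i)) !mulr0.
Qed.

End SpectralBound.

Section Graph.
Variables (R : realFieldType) (N : nat) (e : rel 'I_N).
Local Notation A := (adjmx R e).
Local Notation f := (onesv R N).
Implicit Types (X : {set 'I_N}).

Lemma sum_indicator (P : {pred 'I_N}) : \sum_(i < N) (i \in P)%:R = #|P|%:R :> R.
Proof. by rewrite -natr_sum -sum1_card [in RHS]big_mkcond; congr _%:R. Qed.

Lemma adjmx_sym : symmetric e -> A^T = A.
Proof. by move=> e_sym; apply/matrixP => i j; rewrite !mxE e_sym. Qed.

Lemma adjmx_regular d : symmetric e -> (forall v, #|[set w | e v w]| = d) ->
  f *m A = d%:R *: f.
Proof.
move=> e_sym e_reg; apply/rowP => j; rewrite !mxE mulr1 -(e_reg j) cardsE -sum_indicator.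
by apply: eq_bigr => i _; rewrite !mxE mul1r e_sym.
Qed.

Lemma dot_ones : dot f f = N%:R.
Proof.
rewrite /dot (eq_bigr (fun _ => 1)) => [|i _]; last by rewrite !mxE mulr1.
by rewrite sumr_const card_ord.
Qed.

Lemma dot_ones_charv X : dot f (charv R X) = #|X|%:R.
Proof. by rewrite -sum_indicator; apply: eq_bigr => i _; rewrite !mxE mul1r. Qed.

Lemma dot_charv X : dot (charv R X) (charv R X) = #|X|%:R.
Proof.
rewrite -sum_indicator; apply: eq_bigr => i _.
by rewrite !mxE; case: (i \in X); rewrite ?mulr1 ?mulr0.
Qed.

(* <chi_X A, chi_X> counts the edges inside X, so it is 0 for X independent. *)
Lemma charv_independent X : {in X &, forall x y, ~~ e x y} ->
  dot (charv R X *m A) (charv R X) = 0.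
Proof.
move=> X_indep; rewrite /dot big1 // => j _; rewrite mxE big_distrl big1 //= => i _.
rewrite !mxE; have [iX|] := boolP (i \in X); last by rewrite !mul0r.
have [jX|] := boolP (j \in X); last by rewrite !mulr0.
by rewrite (negbTE (X_indep i j iX jX)) mulr0 mul0r.
Qed.

End Graph.

Section InvariantSubspace.
Variables (R : fieldType) (N : nat) (A : 'M[R]_N) (lam : nat -> R) (M : nat).
Local Notation U := (Usp A lam M).

Lemma ones_in_Usp : (onesv R N <= U)%MS.
Proof. by apply: submx_trans (addsmxSl _ _); rewrite genmxE. Qed.

Lemma eigenvector_in_Usp i (u : 'rV[R]_N) :
  (M < i <= N)%N -> u *m A = lam i *: u -> (u <= U)%MS.
Proof.
move=> /andP[Mi iN] uA; apply: submx_trans (addsmxSr _ _).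
rewrite big_geq_mkord (sumsmx_sup (Ordinal (iN : i < N.+1)%N)) //.
by apply/sub_kermxP; rewrite mulmxBr mul_mx_scalar uA subrr.
Qed.

Lemma Usp_stable c : onesv R N *m A = c *: onesv R N -> (U *m A <= U)%MS.
Proof.
move=> fA; rewrite /Usp addsmxMr addsmxS //.
  by rewrite (eqmxMr _ (genmxE _)) genmxE fA scalemx_sub.
rewrite big_geq_mkord sumsmxMr sumsmxS // => i _; apply: comm_mx_stable_ker.
by rewrite /comm_mx mulmxBl mulmxBr mul_mx_scalar mul_scalar_mx.
Qed.

End InvariantSubspace.

(* The final elimination: with Q = <q,q>, W = <w,w>, P1 = <qA,q>, P2 = <wA,w>,
   the two identities and the two Rayleigh bounds give the claimed bound on
   W / N. *)
Lemma energy_bound_arith (R : realFieldType) (Nn d L m a Q W P1 P2 : R) :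
  0 < Nn -> m < L ->
  - L * Q <= P1 -> - m * W <= P2 ->
  a ^+ 2 * d * Nn + P1 + P2 = 0 -> a * Nn = a ^+ 2 * Nn + Q + W ->
  Nn^-1 * W <= ((1 - a) * L - d * a) / (L - m) * a.
Proof.
move=> Nn_gt0 mL P1_ge P2_ge energy mass.
have Lm_gt0 : 0 < L - m by rewrite subr_gt0.
have key : (L - m) * W <= Nn * (a * ((1 - a) * L - d * a)) by nra.
rewrite mulrAC ler_pdivlMr // -mulrA ler_pdivrMl //; nra.
Qed.

(* The theorem for N = n.+1 vertices. *)
Section IndependentSetBound.
Variables (R : realFieldType) (n : nat) (e : rel 'I_n.+1) (d : nat).
Variables (lam : nat -> R) (M : nat) (X : {set 'I_n.+1}) (p : 'rV[R]_n.+1).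
Hypothesis e_sym : symmetric e.
Hypothesis e_reg : forall v, #|[set w | e v w]| = d.
Hypothesis lam_sorted :
  forall i j : nat, (1 <= i)%N -> (i <= j)%N -> (j <= n.+1)%N -> lam j <= lam i.
Hypothesis lam_char : char_poly (adjmx R e) = \prod_(1 <= i < n.+2) ('X - (lam i)%:P).
Hypothesis M_le : (M <= n)%N.
Hypothesis X_indep : forall x y, x \in X -> y \in X -> ~~ e x y.

Local Notation A := (adjmx R e).
Local Notation f := (onesv R n.+1).
Local Notation chi := (charv R X).
Local Notation U := (Usp A lam M).
Local Notation Nn := (n.+1)%:R.
Local Notation alpha := (#|X|%:R / Nn).

Hypothesis p_proj : is_orth_proj U chi p.

Local Notation w := (chi - p).
Local Notation q := (p - alpha *: f).

Let A_sym : A^T = A := adjmx_sym R e_sym.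
Let f_eigen : f *m A = d%:R *: f := adjmx_regular R e_sym e_reg.
Let Nn_neq0 : Nn != 0 :> R. Proof. by rewrite pnatr_eq0. Qed.

Lemma chi_split : chi = alpha *: f + q + w.
Proof. by rewrite [alpha *: f + _]addrC subrK addrC subrK. Qed.

Lemma w_orth_U u : (u <= U)%MS -> dot w u = 0.
Proof.
move=> uU; have /eqP := p_proj.2 u uU.
by rewrite /inner mulf_eq0 invr_eq0 (negbTE Nn_neq0) => /eqP.
Qed.

Lemma q_in_U : (q <= U)%MS.
Proof. by rewrite addmx_sub ?eqmx_opp ?scalemx_sub ?ones_in_Usp ?p_proj.1. Qed.

Lemma qA_in_U : (q *m A <= U)%MS.
Proof. exact: submx_trans (submxMr A q_in_U) (Usp_stable _ _ f_eigen). Qed.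

(* <f, p> = <f, chi> = |X| = alpha <f, f>, so q is orthogonal to f. *)
Lemma ones_orth_q : dot f q = 0.
Proof.
have f_p : dot f p = dot f chi.
  by apply/eqP; rewrite eq_sym -subr_eq0 -dotBr dotC w_orth_U ?ones_in_Usp.
by rewrite dotBr dotZr f_p dot_ones_charv dot_ones divfK // subrr.
Qed.

Lemma ones_orth_w : dot f w = 0.
Proof. by rewrite dotC w_orth_U ?ones_in_Usp. Qed.

Lemma q_orth_w : dot q w = 0.
Proof. by rewrite dotC w_orth_U ?q_in_U. Qed.

Lemma mass_identity : dot chi chi = alpha ^+ 2 * Nn + dot q q + dot w w.
Proof.
have af_q : dot (alpha *: f) q = 0 by rewrite dotZl ones_orth_q mulr0.
have af_w : dot (alpha *: f) w = 0 by rewrite dotZl ones_orth_w mulr0.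
rewrite {1 2}chi_split (dot_pythagoras af_q af_w q_orth_w) dotZl dotZr dot_ones.
by rewrite mulrA -expr2.
Qed.

(* The quadratic form of A decomposes along chi = alpha f + q + w: the cross
   terms vanish since f is an eigenvector, U is A-invariant and w _|_ U. *)
Lemma energy_identity :
  dot (chi *m A) chi = alpha ^+ 2 * d%:R * Nn + dot (q *m A) q + dot (w *m A) w.
Proof.
have afA : alpha *: f *m A = (alpha * d%:R) *: f by rewrite -scalemxAl f_eigen scalerA.
have afA_q : dot (alpha *: f *m A) q = 0 by rewrite afA dotZl ones_orth_q mulr0.
have afA_w : dot (alpha *: f *m A) w = 0 by rewrite afA dotZl ones_orth_w mulr0.
have qA_w : dot (q *m A) w = 0 by rewrite dotC w_orth_U ?qA_in_U.
rewrite {1 2}chi_split dot_split3 // afA dotZl dotZr dot_ones.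
by rewrite mulrACA -expr2 mulrA.
Qed.

Let A_char : char_poly A = \prod_(i < n.+1) ('X - (lam i.+1)%:P).
Proof. by rewrite lam_char big_add1 big_mkord. Qed.

Lemma q_energy : - `|lam n.+1| * dot q q <= dot (q *m A) q.
Proof.
apply: le_trans (rayleigh_lower_bound A_sym A_char (c := lam n.+1) _).
  by rewrite ler_wpM2r ?dot_ge0 ?lerNnormlW.
by move=> i; rewrite ltNge lam_sorted.
Qed.

(* Rayleigh bound for w: eigenvalues below lam_M have index > M, so their
   eigenvectors lie in U and are orthogonal to w. *)
Lemma w_energy : - `|lam M| * dot w w <= dot (w *m A) w.
Proof.
apply: le_trans (rayleigh_lower_bound A_sym A_char (c := lam M) _).
  by rewrite ler_wpM2r ?dot_ge0 ?lerNnormlW.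
move=> i lam_lt u u_eigen; apply/w_orth_U/(eigenvector_in_Usp _ u_eigen).
rewrite ltn_ord andbT ltnNge; apply: contraTN lam_lt => iM.
by rewrite -leNgt lam_sorted // (leq_trans M_le).
Qed.

Lemma independent_set_projection_bound : `|lam M| < `|lam n.+1| ->
  sqnorm w <= ((1 - alpha) * `|lam n.+1| - d%:R * alpha) / (`|lam n.+1| - `|lam M|) * alpha.
Proof.
move=> lam_lt; apply: (energy_bound_arith _ lam_lt q_energy w_energy).
- by rewrite ltr0n.
- by rewrite -energy_identity charv_independent.
- by rewrite -mass_identity dot_charv divfK.
Qed.

End IndependentSetBound.

Theorem lemma4p2 (R : rcfType) (N : nat) (e : rel 'I_N) (d : nat)
  (lam : nat -> R) (M : nat) (X : {set 'I_N}) (p : 'rV[R]_N) :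
  symmetric e -> irreflexive e ->
  (forall v : 'I_N, #|[set w | e v w]| = d) ->
  (forall i j : nat, (1 <= i)%N -> (i <= j)%N -> (j <= N)%N -> lam j <= lam i) ->
  char_poly (adjmx R e) = \prod_(1 <= i < N.+1) ('X - (lam i)%:P) ->
  (1 <= M)%N -> (M <= N.-1)%N ->
  `|lam M| < `|lam N| ->
  (forall x y, x \in X -> y \in X -> ~~ e x y) ->
  is_orth_proj (Usp (adjmx R e) lam M) (charv R X) p ->
  let alpha := #|X|%:R / N%:R in
  sqnorm (charv R X - p) <=
    ((1 - alpha) * `|lam N| - d%:R * alpha) / (`|lam N| - `|lam M|) * alpha.
Proof.
move=> e_sym _ e_reg lam_sorted lam_char M_ge1 M_le lam_lt X_indep p_proj /=.
case: N => [|n] in e X p e_sym e_reg lam_sorted lam_char M_le lam_lt X_indep p_proj *.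
  (* no M satisfies 1 <= M <= N - 1 when N = 0 *)
  by case: M M_ge1 M_le {lam_lt p_proj}.
exact: independent_set_projection_bound.
Qed.
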